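(* For a subset $C\subseteq L$, the following are equivalent: (i) $C$ is $\mathbf{u}$-compatible; (ii) there exists a (not necessarily straight) road map $(\{H^\alpha_p\},\{V^\beta_q\})$ such that for every $k=1,\dots,r$, $$C|_k\subseteq\Big(\bigcup_{p=1}^{u_{\mathrm{t}(h_k)}}H^{\mathrm{t}(h_k)}_p|_k\Big)\cap\Big(\bigcup_{q=1}^{u_{\mathrm{s}(h_k)}}V^{\mathrm{s}(h_k)}_q|_k\Big).$$
   Context: Let $\mathcal{Q}$ be a bipartite quiver with vertex set $V_{\mathcal{Q}}=V_{\rm source}\sqcup V_{\rm target}$ and arrows $h_1,\dots,h_r$, each $h_k$ from $\mathrm{s}(h_k)\in V_{\rm source}$ to $\mathrm{t}(h_k)\in V_{\rm target}$. Let $\mathbf{m}=(m_\gamma)$, $\mathbf{u}=(u_\gamma)$ be tuples of nonnegative integers indexed by $V_{\mathcal{Q}}$. For $k=1,\dots,r$ let $X^{(k)}$ be an $m_{\mathrm{t}(h_k)}\times m_{\mathrm{s}(h_k)}$ matrix of variables $x^{(k)}_{ij}$; page $k$ is the grid $[1,m_{\mathrm{t}(h_k)}]\times[1,m_{\mathrm{s}(h_k)}]$. For $\alpha\in V_{\rm target}$ with $r_1<\dots<r_s$ the indices of arrows with target $\alpha$, $A_\alpha=[X^{(r_1)}|\cdots|X^{(r_s)}]$; for $\beta\in V_{\rm source}$ with $r'_1<\dots<r'_t$ the indices of arrows with source $\beta$, $A_\beta$ is the stack of $X^{(r'_1)},\dots,X^{(r'_t)}$ top to bottom. $a_\gamma\times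 b_\gamma$ is the size of $A_\gamma$; $v_\alpha=\sum_{k:\mathrm{t}(h_k)=\alpha}u_{\mathrm{s}(h_k)}$, $v_\beta=\sum_{k:\mathrm{s}(h_k)=\beta}u_{\mathrm{t}(h_k)}$. Standing assumption: $0<u_\gamma\le\min(a_\gamma,b_\gamma)$, $u_\alpha\le v_\alpha$, $u_\beta\le v_\beta$. $L=\{(i,j,k)\in\mathbb{Z}^3:1\le k\le r,\ (i,j)\text{ in page }k\}$; for $C\subseteq L$, $C|_k=\{(i,j):(i,j,k)\in C\}$. $\phi_\gamma$ sends a position $(p,q)$ of $A_\gamma$ to $(i,j,k)$ if that entry is $x^{(k)}_{ij}$; $C^\gamma=\phi_\gamma^{-1}(C)$. Coordinates $(i,j)$: $i$ row (downward, north = decreasing $i$), $j$ column (eastward). A diagonal chain of size $s$ is $\{(i_1,j_1),\dots,(i_s,j_s)\}$ with $i_1<\dots<i_s$, $j_1<\dots<j_s$. $C$ is $\mathbf{u}$-compatible if no $C^\gamma$ contains a diagonal chain of size $u_\gamma+1$. A path is a lattice path with unit steps going east $(0,1)$ or north $(-1,0)$ from its SW endpoint to its NE endpoint; nonintersecting = no shared vertex. A road map consists of, for each $\alpha\in V_{\rm target}$, nonintersecting paths $H^\alpha_1,\dots,H^\alpha_{u_\alpha}$ in the grid of $A_\alpha$, $H^\alpha_p$ with endpoints $(a_\alpha-u_\alpha+p,1)$, $(p,b_\alpha)$, and for each $\beta\in V_{\rm source}$ nonintersecting paths $V^\beta_1,\dots,V^\beta_{u_\beta}$ in the grid of $A_\beta$,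 $V^\beta_q$ with endpoints $(1,b_\beta-u_\beta+q)$, $(a_\beta,q)$. For a path $H$ in $A_\gamma$, $H|_k$ denotes the set of its lattice points lying in the block of page $k$, written in page-$k$ coordinates. *)

From mathcomp Require Import all_boot.
Set Implicit Arguments. Unset Strict Implicit. Unset Printing Implicit Defensive.

(* A bipartite quiver: source vertices 'I_nsrc, target vertices 'I_ntgt,
   arrows h_1..h_r indexed by 'I_narr (arrow k+1 of the paper is k : 'I_narr;
   the order of arrows is the order of 'I_narr). *)
Record bquiver := BQuiver {
  nsrc : nat; ntgt : nat; narr : nat;
  src : 'I_narr -> 'I_nsrc;
  tgt : 'I_narr -> 'I_ntgt }.

Section Defs.
Variables (Q : bquiver)
  (ms : 'I_(nsrc Q) -> nat) (mt : 'I_(ntgt Q) -> nat)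
  (us : 'I_(nsrc Q) -> nat) (ut : 'I_(ntgt Q) -> nat).

(* sizes: A_alpha is aT alpha x bT alpha, A_beta is aS beta x bS beta *)
Definition aT (a : 'I_(ntgt Q)) : nat := mt a.
Definition bT (a : 'I_(ntgt Q)) : nat := \sum_(k < narr Q | tgt k == a) ms (src k).
Definition aS (b : 'I_(nsrc Q)) : nat := \sum_(k < narr Q | src k == b) mt (tgt k).
Definition bS (b : 'I_(nsrc Q)) : nat := ms b.
Definition vT (a : 'I_(ntgt Q)) : nat := \sum_(k < narr Q | tgt k == a) us (src k).
Definition vS (b : 'I_(nsrc Q)) : nat := \sum_(k < narr Q | src k == b) ut (tgt k).

(* column offset of block k inside A_{t(h_k)}, row offset of block k inside A_{s(h_k)} *)
Definition offT (k : 'I_(narr Q)) : nat :=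
  \sum_(k' < narr Q | (k' < k) && (tgt k' == tgt k)) ms (src k').
Definition offS (k : 'I_(narr Q)) : nat :=
  \sum_(k' < narr Q | (k' < k) && (src k' == src k)) mt (tgt k').

Definition in_page (k : 'I_(narr Q)) (i j : nat) : Prop :=
  1 <= i <= mt (tgt k) /\ 1 <= j <= ms (src k).

(* subsets of L, as predicates on triples (i, j, k) *)
Definition subL (C : nat -> nat -> 'I_(narr Q) -> Prop) : Prop :=
  forall i j k, C i j k -> in_page k i j.

Definition phiT (a : 'I_(ntgt Q)) (p q i j : nat) (k : 'I_(narr Q)) : Prop :=
  tgt k = a /\ in_page k i j /\ p = i /\ q = offT k + j.
Definition phiS (b : 'I_(nsrc Q)) (p q i j : nat) (k : 'I_(narr Q)) : Prop :=
  src k = b /\ in_page k i j /\ p = offS k + i /\ q = j.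

Definition CT (C : nat -> nat -> 'I_(narr Q) -> Prop) (a : 'I_(ntgt Q)) (x : nat * nat) : Prop :=
  exists i j k, C i j k /\ phiT a x.1 x.2 i j k.
Definition CS (C : nat -> nat -> 'I_(narr Q) -> Prop) (b : 'I_(nsrc Q)) (x : nat * nat) : Prop :=
  exists i j k, C i j k /\ phiS b x.1 x.2 i j k.

Definition has_diag_chain (D : nat * nat -> Prop) (s : nat) : Prop :=
  exists c : seq (nat * nat),
    size c = s /\ sorted (fun x y => (x.1 < y.1) && (x.2 < y.2)) c /\
    forall x, x \in c -> D x.

Definition u_compatible (C : nat -> nat -> 'I_(narr Q) -> Prop) : Prop :=
  (forall a, ~ has_diag_chain (CT C a) (ut a).+1) /\
  (forall b, ~ has_diag_chain (CS C b) (us b).+1).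

End Defs.

(* unit lattice steps: east (0,1) or north (-1,0) *)
Definition lstep (x y : nat * nat) : bool :=
  ((y.1 == x.1) && (y.2 == x.2.+1)) || ((y.1.+1 == x.1) && (y.2 == x.2)).

(* P is a lattice path (list of its lattice points, from its SW endpoint sw
   to its NE endpoint ne) inside the grid [1,a] x [1,b] *)
Definition lattice_path (a b : nat) (P : seq (nat * nat)) (sw ne : nat * nat) : Prop :=
  exists rest, P = sw :: rest /\ last sw rest = ne /\ path lstep sw rest /\
    all (fun x => (1 <= x.1 <= a) && (1 <= x.2 <= b)) P.

Definition nonintersecting (u : nat) (P : nat -> seq (nat * nat)) : Prop :=
  forall p p' x, 1 <= p <= u -> 1 <= p' <= u -> p <> p' ->
    x \in P p -> x \in P p' -> False.

Section RoadMap.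
Variables (Q : bquiver)
  (ms : 'I_(nsrc Q) -> nat) (mt : 'I_(ntgt Q) -> nat)
  (us : 'I_(nsrc Q) -> nat) (ut : 'I_(ntgt Q) -> nat).

Definition road_map (H : 'I_(ntgt Q) -> nat -> seq (nat * nat))
                    (V : 'I_(nsrc Q) -> nat -> seq (nat * nat)) : Prop :=
  (forall a,
     (forall p, 1 <= p <= ut a ->
        lattice_path (aT mt a) (bT ms a) (H a p)
          (aT mt a - ut a + p, 1) (p, bT ms a)) /\
     nonintersecting (ut a) (H a)) /\
  (forall b,
     (forall q, 1 <= q <= us b ->
        lattice_path (aS mt b) (bS ms b) (V b q)
          (aS mt b, q) (1, bS ms b - us b + q)) /\
     nonintersecting (us b) (V b)).

(* H|_k : lattice points of H in the block of page k, in page-k coordinates;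
   here H is a path in A_{t(h_k)} (resp. A_{s(h_k)} for resS). *)
Definition resT (k : 'I_(narr Q)) (H : seq (nat * nat)) (x : nat * nat) : Prop :=
  (x.1, offT ms k + x.2) \in H /\ 1 <= x.1 <= mt (tgt k) /\ 1 <= x.2 <= ms (src k).
Definition resS (k : 'I_(narr Q)) (V : seq (nat * nat)) (x : nat * nat) : Prop :=
  (offS mt k + x.1, x.2) \in V /\ 1 <= x.1 <= mt (tgt k) /\ 1 <= x.2 <= ms (src k).

Definition covered (C : nat -> nat -> 'I_(narr Q) -> Prop)
    (H : 'I_(ntgt Q) -> nat -> seq (nat * nat))
    (V : 'I_(nsrc Q) -> nat -> seq (nat * nat)) : Prop :=
  forall k i j, C i j k ->
    (exists p, 1 <= p <= ut (tgt k) /\ resT k (H (tgt k) p) (i, j)) /\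
    (exists q, 1 <= q <= us (src k) /\ resS k (V (src k) q) (i, j)).

End RoadMap.

(* A lattice path only moves north and east, so it never contains
   two points of a diagonal chain; a chain in C^gamma covered by u_gamma paths
   therefore has at most u_gamma points.

   Conversely, fix a vertex with grid a x b and D = C^gamma.  Mark additionally
   the u points (p, b - u + p) and let level i j be the length of a longest diagonal
   chain of marked points in [1, i] x [1, j].  Compatibility gives level <= u, since a
   chain through (p, b - u + p) continues in only u - p columns.  The p-th path
   climbs, in each column j, between the first rows where level reaches p in
   columns j - 1 and j.  These staircases are disjoint because level grows by at
   most one along a diagonal step, and a point of D lies on the staircase of its
   own level.  The source-side paths come from the target-side ones through the
   reflection (i, j) |-> (b + 1 - j, a + 1 - i). *)

From mathcomp Require Import all_boot zify boolp.
Set Implicit Arguments. Unset Strict Implicit. Unset Printing Implicit Defensive.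

Definition diag_lt (x y : nat * nat) : bool := (x.1 < y.1) && (x.2 < y.2).

Lemma diag_lt_trans : transitive diag_lt.
Proof. by move=> [y1 y2] [x1 x2] [z1 z2]; rewrite /diag_lt /=; lia. Qed.

Definition diag_free (P : seq (nat * nat)) : Prop :=
  forall y z : nat * nat, y \in P -> z \in P -> ~~ diag_lt y z.

Definition covers (u : nat) (P : nat -> seq (nat * nat)) (D : nat * nat -> Prop) : Prop :=
  forall x, D x -> exists p, 1 <= p <= u /\ x \in P p.

Lemma lstep_path_NE (x : nat * nat) s (z : nat * nat) :
  path lstep x s -> z \in s -> z.1 <= x.1 /\ x.2 <= z.2.
Proof.
elim: s x => [|[y1 y2] s IH] [x1 x2] //= /andP[hxy hp].
rewrite inE => /predU1P[->|hz]; first by move: hxy; rewrite /lstep /=; lia.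
by have := IH _ hp hz; move: hxy; rewrite /lstep /=; lia.
Qed.

Lemma lstep_path_diag_free x s : path lstep x s -> diag_free (x :: s).
Proof.
elim: s x => [|w s IH] x hp y z.
  by rewrite !inE => /eqP-> /eqP->; rewrite /diag_lt ltnn.
have hNE := lstep_path_NE hp; have /andP[_ hp'] := hp.
rewrite inE => /predU1P[->|hy]; rewrite inE => /predU1P[->|hz].
- by rewrite /diag_lt ltnn.
- by have := hNE z hz; rewrite /diag_lt; lia.
- by have := hNE y hy; rewrite /diag_lt; lia.
- exact: IH hp' y z hy hz.
Qed.

Lemma lattice_path_diag_free a b P sw ne : lattice_path a b P sw ne -> diag_free P.
Proof. by case=> rest [-> [_ [hp _]]]; apply: lstep_path_diag_free. Qed.

Lemma size_diag_free_chain s : diag_free s -> sorted diag_lt s -> size s <= 1.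
Proof.
case: s => [|y [|z s]] //= hs /andP[hyz _].
by have := hs y z; rewrite hyz !inE !eqxx orbT => /(_ isT isT).
Qed.

Lemma size_diag_chain_le_cover m (P : nat -> seq (nat * nat)) c :
  covers m P (fun x => x \in c) -> (forall p, 1 <= p <= m -> diag_free (P p)) ->
  sorted diag_lt c -> size c <= m.
Proof.
elim: m c => [|m IH] c hcov hP hc.
  by case: c hcov {hc} => [|x c] // /(_ x (mem_head _ _)) [p [hp _]]; lia.
pose inP := fun x => x \in P m.+1.
rewrite -(count_predC inP c) -!size_filter -[m.+1]add1n leq_add //.
  apply: size_diag_free_chain (sorted_filter diag_lt_trans _ hc) => y z.
  by rewrite !mem_filter => /andP[hy _] /andP[hz _]; apply: (hP m.+1) hy hz; lia.
apply: IH (sorted_filter diag_lt_trans _ hc) => [x|p hp]; last by apply: hP; lia.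
rewrite mem_filter => /andP[hx /hcov [p [hp hxp]]]; exists p; split=> //.
suff : p != m.+1 by lia.
by apply: contraNneq hx => ep; rewrite /= /inP -ep.
Qed.

Lemma cover_no_diag_chain u (P : nat -> seq (nat * nat)) (D : nat * nat -> Prop) :
  covers u P D -> (forall p, 1 <= p <= u -> diag_free (P p)) -> ~ has_diag_chain D u.+1.
Proof.
move=> hcov hP [c [hs [hc hD]]].
suff : size c <= u by rewrite hs ltnn.
by apply: size_diag_chain_le_cover hP hc => x hx; apply: hcov; apply: hD.
Qed.

Lemma homo_leq2 (f : nat -> nat -> nat) :
  (forall i j, f i j <= f i.+1 j) -> (forall i j, f i j <= f i j.+1) ->
  forall i i' j j', i <= i' -> j <= j' -> f i j <= f i' j'.
Proof.
move=> fS1 fS2 i i' j j' /(homo_leq leqnn leq_trans (fS1^~ j)) h1.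
by move/(homo_leq leqnn leq_trans (fS2 i')); apply: leq_trans h1.
Qed.

Section Level.
Variables (a b u : nat) (d : nat -> nat -> bool).
Hypothesis u_le_a : u <= a.
Hypothesis u_le_b : u <= b.
Hypothesis d_grid : forall i j, d i j -> (1 <= i <= a) && (1 <= j <= b).
Hypothesis d_no_chain : ~ has_diag_chain (fun x => d x.1 x.2) u.+1.

(* [level i j] is the length of a longest diagonal chain of marked points in
   [1, i] x [1, j].  The extra marked points (p, b - u + p) pin the end of the
   p-th path at (p, b); the boundary value i - (a - u) on column 0 pins its
   start at (a - u + p, 1). *)
Definition marked i j : bool := d i j || ((1 <= i <= u) && (j == b - u + i)).

Fixpoint level (i j : nat) {struct i} : nat :=
  match i with
  | 0 => 0
  | i'.+1 =>
    (fix level_row (j : nat) : nat :=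
       match j with
       | 0 => i'.+1 - (a - u)
       | j'.+1 => maxn (maxn (level i' j'.+1) (level_row j')) (level i' j' + marked i'.+1 j'.+1)
       end) j
  end.

Lemma level0j j : level 0 j = 0. Proof. by []. Qed.
Lemma leveli0 i : level i 0 = i - (a - u). Proof. by case: i. Qed.
Lemma levelSS i j :
  level i.+1 j.+1 = maxn (maxn (level i j.+1) (level i.+1 j)) (level i j + marked i.+1 j.+1).
Proof. by []. Qed.

Lemma level_mono : forall i i' j j', i <= i' -> j <= j' -> level i j <= level i' j'.
Proof.
apply: homo_leq2 => i j.
  by case: j => [|j]; rewrite ?leveli0 ?levelSS; lia.
by case: i => [|i] //; rewrite levelSS; lia.
Qed.

Lemma level_le_row i j : level i j <= i.
Proof.
elim: i j => [|i IH] j //; elim: j => [|j IHj]; first by rewrite leveli0; lia.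
by rewrite levelSS; have := IH j; have := IH j.+1; case: (marked _ _); lia.
Qed.

Lemma levelSS_le i j : level i.+1 j.+1 <= (level i j).+1.
Proof.
elim: i j => [|i IH] j; first by have := level_le_row 1 j.+1.
suff : level i.+2 j <= (level i.+1 j).+1.
  rewrite levelSS; have := IH j; have := level_mono (leqnSn i) (leqnn j).
  by case: (marked _ _); lia.
elim: j => [|j IHj]; first by rewrite !leveli0; lia.
by rewrite levelSS; have := level_mono (leqnn i.+1) (leqnSn j); case: (marked _ _); lia.
Qed.

Lemma level_anchor p : 1 <= p <= u -> p <= level p (b - u + p).
Proof.
elim: p => [|p IH] // hp; rewrite addnS levelSS.
have -> : marked p.+1 (b - u + p).+1 by rewrite /marked hp addnS eqxx orbT.
case: p IH hp => [|p] IH hp; first lia.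
have hp' : 1 <= p.+1 <= u by lia.
by have := IH hp'; lia.
Qed.

Lemma level_pred_lt i j : d i j -> (level i.-1 j.-1).+1 <= level i j.
Proof.
move=> dij; have := d_grid dij; case: i dij => [|i] dij; first by [].
case: j dij => [|j] dij; first by lia.
by rewrite levelSS /marked dij /=; lia.
Qed.

Fixpoint tail_rank (n m : nat) {struct n} : nat :=
  match n with
  | 0 => 0
  | n'.+1 =>
    (fix tail_rank_row (m : nat) : nat :=
       match m with
       | 0 => 0
       | m'.+1 => maxn (maxn (tail_rank n' m'.+1) (tail_rank_row m'))
                       (tail_rank n' m' + d (a - n') (b - m'))
       end) m
  end.

Lemma tail_rank_n0 n : tail_rank n 0 = 0. Proof. by case: n. Qed.
Lemma tail_rankSS n m : tail_rank n.+1 m.+1 =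
  maxn (maxn (tail_rank n m.+1) (tail_rank n.+1 m)) (tail_rank n m + d (a - n) (b - m)).
Proof. by []. Qed.

Lemma tail_rank_mono : forall n n' m m', n <= n' -> m <= m' -> tail_rank n m <= tail_rank n' m'.
Proof.
apply: homo_leq2 => n m.
  by case: m => [|m]; rewrite ?tail_rank_n0 ?tail_rankSS; lia.
by case: n => [|n] //; rewrite tail_rankSS; lia.
Qed.

Lemma tail_rank_le n m : tail_rank n m <= minn n m.
Proof.
elim: n m => [|n IH] m //; elim: m => [|m IHm]; first by rewrite tail_rank_n0.
by rewrite tail_rankSS; have := IH m; have := IH m.+1; case: (d _ _); lia.
Qed.

Definition tail_chain (n m : nat) (c : seq (nat * nat)) : Prop :=
  sorted diag_lt c /\ forall x : nat * nat, x \in c -> [/\ d x.1 x.2, a < x.1 + n & b < x.2 + m].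

Lemma tail_chain_mono n n' m m' c :
  n <= n' -> m <= m' -> tail_chain n m c -> tail_chain n' m' c.
Proof. by move=> hn hm [hc hx]; split=> // x /hx [? ? ?]; split=> //; lia. Qed.

Lemma tail_rank_chain n m k : k <= tail_rank n m -> exists2 c, size c = k & tail_chain n m c.
Proof.
have nil_chain n' m' : tail_chain n' m' [::] by split=> // x; rewrite in_nil.
elim: n m k => [|n IHn] m k; first by rewrite leqn0 => /eqP->; exists [::].
elim: m k => [|m IHm] k; first by rewrite tail_rank_n0 leqn0 => /eqP->; exists [::].
have weaken n' m' : n' <= n.+1 -> m' <= m.+1 ->
    (exists2 c, size c = k & tail_chain n' m' c) -> exists2 c, size c = k & tail_chain n.+1 m.+1 c.
  by move=> hn hm [c hs hc]; exists c => //; apply: tail_chain_mono hc.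
rewrite tail_rankSS !leq_max -orbA => /or3P[/IHn|/IHm|]; try by apply: weaken; lia.
case dnm : (d (a - n) (b - m)); last by rewrite addn0 => /IHn; apply: weaken; lia.
case: k {weaken} => [|k]; first by exists [::].
rewrite addn1 ltnS => /IHn [c hs [hc hx]]; exists ((a - n, b - m) :: c); first by rewrite /= hs.
split=> [|x]; last by rewrite inE => /predU1P[->|/hx [? ? ?]]; split=> //=; lia.
have below : forall x : nat * nat, x \in c -> diag_lt (a - n, b - m) x.
  by move=> x /hx [/d_grid ? ? ?]; rewrite /diag_lt /=; lia.
by rewrite /= path_sortedE ?hc ?andbT; [apply/allP | exact: diag_lt_trans].
Qed.

Lemma tail_rank_le_u n m : tail_rank n m <= u.
Proof.
rewrite leqNgt; apply/negP => /tail_rank_chain [c hs [hc hx]]; apply: d_no_chain.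
by exists c; split=> //; split=> // x /hx [].
Qed.

(* A chain counted by [level i j] followed by one counted by [tail_rank] is
   again a chain; after a marked point (p, b - u + p) only u - p columns remain. *)
Lemma level_add_tail_rank i j : i <= a -> j <= b -> level i j + tail_rank (a - i) (b - j) <= u.
Proof.
elim: i j => [|i IH] j hi hj; first by rewrite tail_rank_le_u.
elim: j hj => [|j IHj] hj.
  rewrite leveli0; have := tail_rank_le (a - i.+1) (b - 0).
  by have := tail_rank_le_u (a - i.+1) (b - 0); lia.
set K := tail_rank (a - i.+1) (b - j.+1).
have ea : a - i = (a - i.+1).+1 by lia.
have eb : b - j = (b - j.+1).+1 by lia.
have KS_row : K <= tail_rank (a - i) (b - j.+1) by rewrite ea; apply: tail_rank_mono.
have KS_col : K <= tail_rank (a - i.+1) (b - j) by rewrite eb; apply: tail_rank_mono.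
have := IH j.+1 (ltnW hi) hj; have := IHj (ltnW hj).
suff : level i j + marked i.+1 j.+1 + K <= u by rewrite levelSS; lia.
rewrite /marked; case dij : (d i.+1 j.+1) => /=.
  have := IH j (ltnW hi) (ltnW hj); rewrite ea eb tail_rankSS -/K.
  have -> : a - (a - i.+1) = i.+1 by lia.
  have -> : b - (b - j.+1) = j.+1 by lia.
  by rewrite dij; lia.
case: eqP => [ej|_]; last first.
  have := IH j (ltnW hi) (ltnW hj); rewrite andbF.
  have : K <= tail_rank (a - i) (b - j) by apply: tail_rank_mono; lia.
  lia.
have := level_le_row i j; have := tail_rank_le (a - i.+1) (b - j.+1); rewrite -/K.
by case: (_ && _); lia.
Qed.

Lemma level_le_u i j : i <= a -> j <= b -> level i j <= u.
Proof. by move=> hi hj; have := level_add_tail_rank hi hj; lia. Qed.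

Definition frontier p j : nat := find (fun i => p <= level i j) (iota 0 a.+1).

Lemma frontier_le p j i : i <= a -> p <= level i j -> frontier p j <= i.
Proof.
move=> hi hp; rewrite leqNgt; apply/negP => /(before_find 0).
by rewrite nth_iota // add0n hp.
Qed.

Lemma frontier_spec p j : p <= u -> p <= level (frontier p j) j /\ frontier p j <= a - u + p.
Proof.
move=> hp; have hG : p <= level (a - u + p) j.
  by apply: leq_trans (level_mono (leqnn _) (leq0n j)); rewrite leveli0; lia.
have hh : has (fun i => p <= level i j) (iota 0 a.+1).
  by apply/hasP; exists (a - u + p) => //; rewrite mem_iota; lia.
split; last by apply: frontier_le => //; lia.
have ht : frontier p j < a.+1 by move: (hh); rewrite has_find size_iota.
by have := nth_find 0 hh; rewrite -/(frontier p j) nth_iota // add0n.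
Qed.

Lemma frontier_bounds p j : 1 <= p <= u -> p <= frontier p j <= a.
Proof.
case/andP=> _ hp; have [h1 h2] := frontier_spec j hp.
by have := level_le_row (frontier p j) j; lia.
Qed.

Lemma frontier_col0 p : 1 <= p <= u -> frontier p 0 = a - u + p.
Proof. by case/andP=> p_gt0 hp; have [] := frontier_spec 0 hp; rewrite leveli0; lia. Qed.

Lemma frontier_last_col p : 1 <= p <= u -> frontier p b = p.
Proof.
move=> hp; have /andP[lb _] := frontier_bounds b hp.
apply/eqP; rewrite eqn_leq lb andbT.
apply: frontier_le; first lia.
by apply: leq_trans (level_anchor hp) (level_mono (leqnn _) _); lia.
Qed.

Lemma frontier_colS p j : p <= u -> frontier p j.+1 <= frontier p j.
Proof.
move=> hp; have [h1 h2] := frontier_spec j hp; apply: frontier_le; first lia.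
exact: leq_trans h1 (level_mono (leqnn _) (leqnSn j)).
Qed.

(* [level] grows by at most one along a diagonal step. *)
Lemma frontier_ltSS p j : p < u -> frontier p j < frontier p.+1 j.+1.
Proof.
move=> hp; have [h1 h2] := frontier_spec j.+1 hp.
case e : (frontier p.+1 j.+1) h1 h2 => [|i] h1 h2; first by rewrite level0j in h1.
rewrite ltnS; apply: frontier_le; first lia.
by have := levelSS_le i j; lia.
Qed.

Lemma frontier_lt p p' j : p < p' <= u -> frontier p j < frontier p' j.+1.
Proof.
elim: p' => [|p' IH] // /andP[hpp' hp']; apply: leq_ltn_trans (frontier_ltSS j hp').
have [->|ne] := eqVneq p p'; first exact: leqnn.
by apply: ltnW (leq_trans (IH _) (frontier_colS j _)); lia.
Qed.

Lemma frontier_cover i j : d i j -> exists p, 1 <= p <= u /\ frontier p j <= i <= frontier p j.-1.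
Proof.
move=> dij; have := d_grid dij => /andP[/andP[i_gt0 i_le] /andP[j_gt0 j_le]].
have hlev := level_pred_lt dij; have hu := level_le_u i_le j_le.
exists (level i j); split; first lia.
rewrite frontier_le //=; rewrite leqNgt; apply/negP => hlt.
have [h1 _] := frontier_spec j.-1 hu.
have fle : frontier (level i j) j.-1 <= i.-1 by lia.
by have := level_mono fle (leqnn j.-1); lia.
Qed.

End Level.

Fixpoint col_segment (hi n j : nat) : seq (nat * nat) :=
  match n with
  | 0 => [:: (hi, j)]
  | n'.+1 => (hi, j) :: col_segment hi.-1 n' j
  end.

Lemma mem_col_segment hi n j (x : nat * nat) :
  n <= hi -> (x \in col_segment hi n j) = (x.2 == j) && (hi - n <= x.1 <= hi).
Proof.
case: x => x1 x2 /=; elim: n hi => [|n IH] hi hn /=; first by rewrite inE xpair_eqE; lia.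
by rewrite inE IH ?xpair_eqE; lia.
Qed.

Lemma col_segment_path x hi n j : n < hi -> lstep x (hi, j) -> path lstep x (col_segment hi n j).
Proof.
elim: n hi x => [|n IH] hi x hn hx /=; rewrite hx //=.
by apply: IH; rewrite /lstep /=; lia.
Qed.

Lemma last_col_segment x hi n j : last x (col_segment hi n j) = (hi - n, j).
Proof.
elim: n hi x => [|n IH] hi x /=; first by rewrite subn0.
by rewrite IH; congr pair; lia.
Qed.

(* Column j of the staircase is climbed northwards from row t j.-1 to row t j. *)
Fixpoint staircase (t : nat -> nat) (j k : nat) : seq (nat * nat) :=
  match k with
  | 0 => [::]
  | k'.+1 => col_segment (t j.-1) (t j.-1 - t j) j ++ staircase t j.+1 k'
  end.

Section Staircase.
Variables (a b : nat) (t : nat -> nat).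
Hypothesis t_grid : forall j, j <= b -> 1 <= t j <= a.
Hypothesis t_colS : forall j, j < b -> t j.+1 <= t j.

Lemma t_pred_ge j : 1 <= j <= b -> t j <= t j.-1.
Proof. by case: j => [|j] // /andP[_ /t_colS]. Qed.

Lemma mem_staircase j k (x : nat * nat) : 1 <= j -> j + k <= b.+1 ->
  (x \in staircase t j k) = (j <= x.2 < j + k) && (t x.2 <= x.1 <= t x.2.-1).
Proof.
case: x => x1 x2 /=; elim: k j => [|k IH] j hj hk /=; first by rewrite in_nil; lia.
have := @t_pred_ge j; rewrite mem_cat IH ?mem_col_segment /=; try lia.
by have [->|ne] := eqVneq x2 j; lia.
Qed.

Lemma staircase_path x j k : 1 <= j -> j + k <= b.+1 -> lstep x (t j.-1, j) ->
  path lstep x (staircase t j k).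
Proof.
elim: k j x => [|k IH] j x hj hk hx //=; rewrite cat_path.
have := @t_pred_ge j; have := @t_grid j; have := @t_grid j.-1 => hpred hgrid hgrid'.
apply/andP; split; first by apply: col_segment_path => //; lia.
by rewrite last_col_segment; apply: IH; rewrite /lstep /=; lia.
Qed.

Lemma last_staircase x j k : 1 <= j -> j + k < b.+1 ->
  last x (staircase t j k.+1) = (t (j + k), j + k).
Proof.
elim: k j x => [|k IH] j x hj hk.
  have := @t_pred_ge j => tj.
  by rewrite /= cats0 last_col_segment addn0; congr pair; lia.
by rewrite [staircase _ _ _]/= last_cat IH ?addSnnS //; lia.
Qed.

Lemma staircase_lattice_path : 1 <= b -> lattice_path a b (staircase t 1 b) (t 0, 1) (t b, b).
Proof.
move=> hb; have eb : b = b.-1.+1 by rewrite prednK.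
have head_eq : staircase t 1 b = (t 0, 1) :: behead (staircase t 1 b).
  by rewrite eb /=; case: (t 0 - t 1).
exists (behead (staircase t 1 b)); split=> //; split.
  have := last_staircase (t 0, 1) (leqnn 1) (k := b.-1).
  by rewrite add1n -eb head_eq last_cons => ->.
split.
  have := @staircase_path (t 0, 0) 1 b (leqnn _) (leqnn _).
  by rewrite head_eq /= /lstep !eqxx /= => /(_ isT).
apply/allP => -[x1 x2]; rewrite mem_staircase //= => /andP[/andP[h1 h2] /andP[h3 h4]].
by have := t_grid (j := x2); have := t_grid (j := x2.-1); lia.
Qed.

End Staircase.

Definition horizontal_paths (a b u : nat) (H : nat -> seq (nat * nat)) : Prop :=
  (forall p, 1 <= p <= u -> lattice_path a b (H p) (a - u + p, 1) (p, b)) /\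
  nonintersecting u H.

Definition vertical_paths (a b u : nat) (V : nat -> seq (nat * nat)) : Prop :=
  (forall q, 1 <= q <= u -> lattice_path a b (V q) (a, q) (1, b - u + q)) /\
  nonintersecting u V.

Lemma horizontal_path_cover a b u (D : nat * nat -> Prop) :
  0 < u -> u <= a -> u <= b ->
  (forall x, D x -> 1 <= x.1 <= a /\ 1 <= x.2 <= b) -> ~ has_diag_chain D u.+1 ->
  exists H, horizontal_paths a b u H /\ covers u H D.
Proof.
move=> u_gt0 u_le_a u_le_b D_grid D_no_chain.
pose d i j := `[< D (i, j) >].
have d_grid i j : d i j -> (1 <= i <= a) && (1 <= j <= b).
  by move=> /asboolP /D_grid /= [-> ->].
have d_no_chain : ~ has_diag_chain (fun x => d x.1 x.2) u.+1.
  move=> [c [hs [hc hx]]]; apply: D_no_chain; exists c; split=> //; split=> //.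
  by move=> [x1 x2] /hx /asboolP.
have t_grid p : 1 <= p <= u -> forall j, j <= b -> 1 <= frontier a b u d p j <= a.
  by move=> hp j _; have := frontier_bounds d u_le_a u_le_b j hp; case/andP: hp; lia.
have t_colS p : 1 <= p <= u -> forall j, j < b -> frontier a b u d p j.+1 <= frontier a b u d p j.
  by move=> /andP[_ hp] j _; apply: frontier_colS.
exists (fun p => staircase (frontier a b u d p) 1 b); split; first split.
- move=> p hp; have := staircase_lattice_path (t_grid p hp) (t_colS p hp) (leq_trans u_gt0 u_le_b).
  by rewrite frontier_col0 // frontier_last_col.
- move=> p p' [i j] hp hp' ne.
  rewrite (mem_staircase (t_colS p hp)) // (mem_staircase (t_colS p' hp')) //=.
  move=> /andP[/andP[j_gt0 _] hi] /andP[_ hi'].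
  have := frontier_lt d u_le_a u_le_b (p := p) (p' := p') j.-1.
  have := frontier_lt d u_le_a u_le_b (p := p') (p' := p) j.-1.
  by rewrite prednK //; lia.
move=> [i j] /[dup] /D_grid /= [hi hj] /asboolP dij.
have [p [hp /andP[lo hi']]] := frontier_cover u_le_a u_le_b d_grid d_no_chain dij.
by exists p; split=> //; rewrite (mem_staircase (t_colS p hp)) //= lo hi' !andbT; lia.
Qed.

Definition in_grid (a b : nat) (x : nat * nat) : bool := (1 <= x.1 <= a) && (1 <= x.2 <= b).

(* Reflection in the antidiagonal, mapping the a x b grid onto the b x a grid
   and exchanging east and north steps. *)
Definition flip_grid (a b : nat) (x : nat * nat) : nat * nat := (b.+1 - x.2, a.+1 - x.1).

Lemma flip_gridK a b x : in_grid a b x -> flip_grid b a (flip_grid a b x) = x.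
Proof. by case: x => x1 x2; rewrite /in_grid /flip_grid /= => hx; congr pair; lia. Qed.

Lemma in_grid_flip a b x : in_grid a b x -> in_grid b a (flip_grid a b x).
Proof. by case: x => x1 x2; rewrite /in_grid /flip_grid /=; lia. Qed.

Lemma lstep_flip a b x y : in_grid a b x -> in_grid a b y -> lstep x y ->
  lstep (flip_grid a b x) (flip_grid a b y).
Proof. by case: x => x1 x2; case: y => y1 y2; rewrite /in_grid /lstep /flip_grid /=; lia. Qed.

Lemma path_flip a b x s : all (in_grid a b) (x :: s) -> path lstep x s ->
  path lstep (flip_grid a b x) (map (flip_grid a b) s).
Proof.
elim: s x => [|y s IH] x //= /and3P[hx hy hs] /andP[hxy hp].
by rewrite lstep_flip //= IH //= hy.
Qed.

Lemma lattice_path_in_grid a b P sw ne x : lattice_path a b P sw ne -> x \in P -> in_grid a b x.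
Proof. by case=> rest [-> [_ [_ /allP hP]]] /hP. Qed.

Lemma lattice_path_flip a b P sw ne : lattice_path a b P sw ne ->
  lattice_path b a (map (flip_grid a b) P) (flip_grid a b sw) (flip_grid a b ne).
Proof.
case=> rest [-> [hl [hp /allP hP]]]; exists (map (flip_grid a b) rest); split=> //; split.
  by rewrite last_map hl.
split; first by apply: path_flip => //; apply/allP.
by apply/allP => y /mapP [x /hP hx ->]; apply: in_grid_flip.
Qed.

Lemma vertical_path_cover a b u (D : nat * nat -> Prop) :
  0 < u -> u <= a -> u <= b ->
  (forall x, D x -> 1 <= x.1 <= a /\ 1 <= x.2 <= b) -> ~ has_diag_chain D u.+1 ->
  exists V, vertical_paths a b u V /\ covers u V D.
Proof.
move=> u_gt0 u_le_a u_le_b D_grid D_no_chain.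
pose D' y := in_grid b a y /\ D (flip_grid b a y).
have D'_grid y : D' y -> 1 <= y.1 <= b /\ 1 <= y.2 <= a.
  by case: y => y1 y2 [] /=; rewrite /in_grid /=; lia.
have D'_no_chain : ~ has_diag_chain D' u.+1.
  case=> c [hs [hc hx]]; apply: D_no_chain; exists (rev (map (flip_grid b a) c)); split.
    by rewrite size_rev size_map.
  split; last by move=> y; rewrite mem_rev => /mapP [x /hx [_ hDx] ->].
  rewrite rev_sorted sorted_map; apply: (@sub_in_sorted _ (in_grid b a)) hc; last first.
    by apply/allP => x /hx [].
  by move=> [x1 x2] [y1 y2]; rewrite /in_grid /flip_grid /relpre /diag_lt /in_mem /=; lia.
have [H [[H_path H_disj] H_cov]] := horizontal_path_cover u_gt0 u_le_b u_le_a D'_grid D'_no_chain.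
have rev_idx q : 1 <= q <= u -> 1 <= u.+1 - q <= u by lia.
exists (fun q => map (flip_grid b a) (H (u.+1 - q))); split; first split.
- move=> q hq; have := lattice_path_flip (H_path _ (rev_idx q hq)).
  have -> : flip_grid b a (b - u + (u.+1 - q), 1) = (a, q).
    by rewrite /flip_grid /=; congr pair; lia.
  have -> // : flip_grid b a (u.+1 - q, a) = (1, b - u + q).
  by rewrite /flip_grid /=; congr pair; lia.
- move=> q q' x hq hq' ne /mapP [y hy ->] /mapP [y' hy' e].
  have hyg := lattice_path_in_grid (H_path _ (rev_idx q hq)) hy.
  have hyg' := lattice_path_in_grid (H_path _ (rev_idx q' hq')) hy'.
  have eyy : y = y' by rewrite -(flip_gridK hyg) -(flip_gridK hyg') e.
  by subst y'; apply: (H_disj (u.+1 - q) (u.+1 - q') y) => //; lia.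
move=> x Dx; have xg : in_grid a b x by have := D_grid x Dx; rewrite /in_grid; lia.
have [|p [hp hin]] := H_cov (flip_grid a b x); first by split; rewrite ?flip_gridK ?in_grid_flip.
exists (u.+1 - p); split; first lia.
have -> : u.+1 - (u.+1 - p) = p by lia.
by apply/mapP; exists (flip_grid a b x); rewrite ?flip_gridK.
Qed.

Section Quiver.
Variables (Q : bquiver)
  (ms : 'I_(nsrc Q) -> nat) (mt : 'I_(ntgt Q) -> nat)
  (us : 'I_(nsrc Q) -> nat) (ut : 'I_(ntgt Q) -> nat)
  (C : nat -> nat -> 'I_(narr Q) -> Prop).

Lemma offT_block_le k : offT ms k + ms (src k) <= bT ms (tgt k).
Proof.
rewrite /offT /bT [X in _ <= X](bigID (fun k' : 'I_(narr Q) => k' < k)) /=; apply: leq_add.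
  by apply: eq_leq; apply: eq_bigl => k'; rewrite andbC.
by rewrite (bigD1 k) /= ?eqxx ?ltnn // leq_addr.
Qed.

Lemma offS_block_le k : offS mt k + mt (tgt k) <= aS mt (src k).
Proof.
rewrite /offS /aS [X in _ <= X](bigID (fun k' : 'I_(narr Q) => k' < k)) /=; apply: leq_add.
  by apply: eq_leq; apply: eq_bigl => k'; rewrite andbC.
by rewrite (bigD1 k) /= ?eqxx ?ltnn // leq_addr.
Qed.

Lemma CT_in_grid a x : CT ms mt C a x -> 1 <= x.1 <= aT mt a /\ 1 <= x.2 <= bT ms a.
Proof.
case: x => x1 x2 [i [j [k [_ [<- [[hi hj] [/= -> ->]]]]]]].
by have := offT_block_le k; rewrite /aT; lia.
Qed.

Lemma CS_in_grid b x : CS ms mt C b x -> 1 <= x.1 <= aS mt b /\ 1 <= x.2 <= bS ms b.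
Proof.
case: x => x1 x2 [i [j [k [_ [<- [[hi hj] [/= -> ->]]]]]]].
by have := offS_block_le k; rewrite /bS; lia.
Qed.

Variables (H : 'I_(ntgt Q) -> nat -> seq (nat * nat)) (V : 'I_(nsrc Q) -> nat -> seq (nat * nat)).

Lemma covered_of_covers : subL ms mt C ->
  (forall a, covers (ut a) (H a) (CT ms mt C a)) ->
  (forall b, covers (us b) (V b) (CS ms mt C b)) ->
  covered ms mt us ut C H V.
Proof.
move=> hC covT covS k i j Cijk; have page := hC i j k Cijk; split.
  have [|p [hp hin]] := covT (tgt k) (i, offT ms k + j); first by exists i, j, k.
  by exists p; split.
have [|q [hq hin]] := covS (src k) (offS mt k + i, j); first by exists i, j, k.
by exists q; split.
Qed.

Lemma covers_of_covered : covered ms mt us ut C H V ->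
  (forall a, covers (ut a) (H a) (CT ms mt C a)) /\ (forall b, covers (us b) (V b) (CS ms mt C b)).
Proof.
move=> cov; split=> [a | b] [x1 x2] [i [j [k [Cijk [<- [_ [/= -> ->]]]]]]].
  by have [[p [hp [hin _]]] _] := cov k i j Cijk; exists p.
by have [_ [q [hq [hin _]]]] := cov k i j Cijk; exists q.
Qed.

End Quiver.

Unset Implicit Arguments.

Theorem lemma2p8 (Q : bquiver)
  (ms : 'I_(nsrc Q) -> nat) (mt : 'I_(ntgt Q) -> nat)
  (us : 'I_(nsrc Q) -> nat) (ut : 'I_(ntgt Q) -> nat)
  (hT : forall a, 0 < ut a /\ ut a <= minn (aT mt a) (bT ms a) /\ ut a <= vT us a)
  (hS : forall b, 0 < us b /\ us b <= minn (aS mt b) (bS ms b) /\ us b <= vS ut b)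
  (C : nat -> nat -> 'I_(narr Q) -> Prop) (hC : subL ms mt C) :
  u_compatible ms mt us ut C <->
  exists H V, road_map ms mt us ut H V /\ covered ms mt us ut C H V.
Proof.
split=> [[noT noS] | [H [V [[rT rS] cov]]]].
  have /choice [H hH] : forall a, exists Ha,
      horizontal_paths (aT mt a) (bT ms a) (ut a) Ha /\ covers (ut a) Ha (CT ms mt C a).
    move=> a; have [u_gt0 [+ _]] := hT a; rewrite leq_min => /andP[ua ub].
    exact: horizontal_path_cover u_gt0 ua ub (@CT_in_grid _ ms mt C a) (noT a).
  have /choice [V hV] : forall b, exists Vb,
      vertical_paths (aS mt b) (bS ms b) (us b) Vb /\ covers (us b) Vb (CS ms mt C b).
    move=> b; have [u_gt0 [+ _]] := hS b; rewrite leq_min => /andP[ua ub].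
    exact: vertical_path_cover u_gt0 ua ub (@CS_in_grid _ ms mt C b) (noS b).
  exists H, V; split; first by split=> ?; [exact: (hH _).1 | exact: (hV _).1].
  by apply: covered_of_covers => // [a | b]; [exact: (hH a).2 | exact: (hV b).2].
have [covT covS] := covers_of_covered cov.
split=> [a | b].
  apply: (cover_no_diag_chain (covT a)) => p /(rT a).1.
  exact: lattice_path_diag_free.
apply: (cover_no_diag_chain (covS b)) => q /(rS b).1.
exact: lattice_path_diag_free.
Qed.
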